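(* Let $H\subset\mathbb{R}^n$ be a bounded domain, $c\ge0$ in $H$, and let $u\in C^2(H)\cap C(\overline H)$ satisfy $D_{H,\varphi}u+c(x)u\ge0$ in $H$ and $u=\varphi$ on $\partial H$, where $\varphi\ge0$ on $\partial H$. Then $u\ge0$ in $H$.
   Context: For an open set $H\subset\mathbb{R}^n$, a function $\varphi$ on $\partial H$ (boundary datum) and $u$ on $\overline H$ with $u=\varphi$ on $\partial H$, let $v$ be the bounded harmonic function in the cylinder $\Omega=H\times(0,\infty)$, continuous up to the boundary, with $v(x,0)=u(x)$ for $x\in H$ and lateral data $v(x,\lambda)=\varphi(x)$ for $(x,\lambda)\in\partial H\times[0,\infty)$. Then $D_{H,\varphi}u(x):=-\partial_\lambda v(x,0)$ for $x\in H$. (When $\varphi\equiv0$ this is the operator $A_{1/2}$, a square root of the Dirichlet Laplacian in $H$.) *)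

From Stdlib Require Import Reals.
From mathcomp Require Import ssreflect ssrfun ssrbool eqtype ssrnat seq fintype bigop.
Open Scope R_scope.

Definition pt (n : nat) := 'I_n -> R.

Definition sumR {n : nat} (F : 'I_n -> R) : R := \big[Rplus/R0]_(i : 'I_n) F i.

Definition enorm {n} (x : pt n) : R := sqrt (sumR (fun i => Rsqr (x i))).
Definition edist {n} (x y : pt n) : R := sqrt (sumR (fun i => Rsqr (x i - y i))).

Definition is_open {n} (S : pt n -> Prop) : Prop :=
  forall x, S x -> exists r, 0 < r /\ forall y, edist x y < r -> S y.

Definition is_bounded {n} (S : pt n -> Prop) : Prop :=
  exists M, forall x, S x -> enorm x <= M.

Definition is_connected {n} (S : pt n -> Prop) : Prop :=
  forall U V : pt n -> Prop, is_open U -> is_open V ->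
    (forall x, S x -> U x \/ V x) -> (forall x, S x -> ~ (U x /\ V x)) ->
    (forall x, S x -> U x) \/ (forall x, S x -> V x).

Definition is_domain {n} (S : pt n -> Prop) : Prop :=
  is_open S /\ is_connected S /\ exists x, S x.

Definition closure {n} (S : pt n -> Prop) : pt n -> Prop :=
  fun x => forall r, 0 < r -> exists y, S y /\ edist x y < r.

Definition boundary {n} (S : pt n -> Prop) : pt n -> Prop :=
  fun x => closure S x /\ ~ S x.

Definition cont_on {n} (S : pt n -> Prop) (f : pt n -> R) : Prop :=
  forall x, S x -> forall eps, 0 < eps -> exists d, 0 < d /\
    forall y, S y -> edist x y < d -> Rabs (f y - f x) < eps.

Definition upd {n} (x : pt n) (i : 'I_n) (t : R) : pt n :=
  fun j => if j == i then t else x j.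

Definition is_partial {n} (f : pt n -> R) (i : 'I_n) (x : pt n) (l : R) : Prop :=
  derivable_pt_lim (fun t => f (upd x i t)) (x i) l.

Definition C2_data {n} (S : pt n -> Prop) (f : pt n -> R)
  (Df : 'I_n -> pt n -> R) (D2f : 'I_n -> 'I_n -> pt n -> R) : Prop :=
  (forall i x, S x -> is_partial f i x (Df i x)) /\
  (forall i j x, S x -> is_partial (Df i) j x (D2f i j x)) /\
  cont_on S f /\ (forall i, cont_on S (Df i)) /\ (forall i j, cont_on S (D2f i j)).

Definition C2_on {n} (S : pt n -> Prop) (f : pt n -> R) : Prop :=
  exists Df D2f, C2_data S f Df D2f.

Definition harmonic_on {n} (S : pt n -> Prop) (f : pt n -> R) : Prop :=
  exists Df D2f, C2_data S f Df D2f /\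
    forall x, S x -> sumR (fun i => D2f i i x) = 0.

(* R^{n+1} = R^n x R, the last coordinate (ord_max) being lambda. *)
Definition ext {n} (x : pt n) (l : R) : pt n.+1 :=
  fun j => match unlift ord_max j with Some i => x i | None => l end.
Definition base {n} (y : pt n.+1) : pt n := fun i => y (lift ord_max i).

Definition cyl {n} (H : pt n -> Prop) : pt n.+1 -> Prop :=
  fun y => H (base y) /\ 0 < y ord_max.

Definition is_ext {n} (H : pt n -> Prop) (phi u : pt n -> R) (v : pt n.+1 -> R) : Prop :=
  harmonic_on (cyl H) v /\
  (exists M, forall y, cyl H y -> Rabs (v y) <= M) /\
  cont_on (closure (cyl H)) v /\
  (forall x, H x -> v (ext x 0) = u x) /\
  (forall x l, boundary H x -> 0 <= l -> v (ext x l) = phi x).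

Definition right_deriv (g : R -> R) (a l : R) : Prop :=
  forall eps, 0 < eps -> exists d, 0 < d /\
    forall h, 0 < h -> h < d -> Rabs ((g (a + h) - g a) / h - l) < eps.

Definition DHphi {n} (H : pt n -> Prop) (phi u : pt n -> R) (x : pt n) (d : R) : Prop :=
  exists v, is_ext H phi u v /\ right_deriv (fun l => v (ext x l)) 0 (- d).

From Stdlib Require Import Reals.
From mathcomp Require Import ssreflect ssrfun ssrbool eqtype ssrnat seq fintype bigop.
From Stdlib Require Import Lra FunctionalExtensionality Classical ClassicalEpsilon.
From Coquelicot Require Compactness.
From Coquelicot Require Import Rcomplements Hierarchy Derive AutoDerive.
From HB Require Import structures.
Open Scope R_scope.

(* Let u attain its minimum m over the compact set closure H at y0.  If m >= 0
   we are done.  Otherwise y0 lies in H (on dH, u = phi >= 0), and we show that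
   D_{H,phi} u (y0) = d < 0, contradicting d + c(y0) m >= 0 since c(y0) m <= 0.
   Let v be the harmonic extension of u to the cylinder H x (0, oo).
   (1) Comparing v with affine functions m - eta lambda on truncated cylinders
       H x (0, L) via the weak minimum principle gives v >= m everywhere.
   (2) Comparing v - m with the harmonic barrier eps sin (pi lambda) e^(pi x_1)
       on H x (0, 1) gives v (y0, h) - m >= a sin (pi h) with a > 0.
   (3) Hence - d = d/dlambda v (y0, 0+) >= a pi / 2 > 0.
   The file first develops coordinate sums and distances, closures, the
   extreme value theorem, continuity and partial derivatives, harmonic
   comparison functions, the second derivative test and the weak minimum
   principle; then truncated cylinders, the estimates (1)-(2) on the
   extension, the one-dimensional slope estimate (3), and finally Theorem 7. *)

HB.instance Definition _ :=
  Monoid.isComLaw.Build R R0 Rplus (fun a b c => esym (Rplus_assoc a b c)) Rplus_comm Rplus_0_l.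

Lemma sumR_le {N} (F G : 'I_N -> R) : (forall i, F i <= G i) -> sumR F <= sumR G.
Proof.
move=> FG; apply: (big_ind2 (fun a b => a <= b)) => //; first lra.
by move=> *; lra.
Qed.

Lemma sumR_ge0 {N} (F : 'I_N -> R) : (forall i, 0 <= F i) -> 0 <= sumR F.
Proof.
move=> F0; have := sumR_le (fun _ => 0) F F0.
by rewrite /sumR big1 //.
Qed.

Lemma sumR_add {N} (F G : 'I_N -> R) : sumR (fun i => F i + G i) = sumR F + sumR G.
Proof. by rewrite /sumR big_split. Qed.

Lemma sumR_one {N} (F : 'I_N -> R) j : (forall i, i != j -> F i = 0) -> sumR F = F j.
Proof.
move=> F0; rewrite /sumR (bigD1 j) //= big1 ?Rplus_0_r // => i /F0.
Qed.

Lemma sumR_two {N} (F : 'I_N -> R) j k : j != k ->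
  (forall i, i != j -> i != k -> F i = 0) -> sumR F = F j + F k.
Proof.
move=> jk F0; rewrite /sumR (bigD1 j) // (bigD1 k) /=; last by rewrite eq_sym jk.
by rewrite big1 ?Rplus_0_r // => i /andP [] /F0 F0i /F0i.
Qed.

Lemma sumR_term {N} (F : 'I_N -> R) j : (forall i, 0 <= F i) -> F j <= sumR F.
Proof.
move=> F0; rewrite /sumR (bigD1 j) //= -{1}(Rplus_0_r (F j)).
apply: Rplus_le_compat_l.
by apply: (big_ind (fun a => 0 <= a)) => //; [lra | move=> *; lra].
Qed.

Lemma sumR_lt {N} (F G : 'I_N -> R) : (0 < N)%nat -> (forall i, F i < G i) -> sumR F < sumR G.
Proof.
case: N F G => // N F G _ FG; rewrite /sumR (bigD1 ord0) // [X in _ < X](bigD1 ord0) //=.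
apply: Rplus_lt_le_compat; first exact: FG.
apply: (big_ind2 (fun a b => a <= b)) => //; first lra.
  by move=> *; lra.
by move=> i _; apply: Rlt_le.
Qed.

Lemma sumR_const {N} (a : R) : sumR (fun _ : 'I_N => a) = INR N * a.
Proof.
rewrite /sumR big_const card_ord; elim: N => [|N IH] /=; first lra.
by rewrite IH; case: N {IH} => [|N] /=; lra.
Qed.

Lemma sumR_lift {n} (F : 'I_n.+1 -> R) :
  sumR F = sumR (fun i : 'I_n => F (lift ord_max i)) + F ord_max.
Proof.
rewrite /sumR big_ord_recr /=; congr (_ + _); apply: eq_bigr => i _; congr F.
by apply: val_inj; rewrite /= /bump leqNgt ltn_ord.
Qed.

Lemma coord_le_edist {N} (x y : pt N) i : Rabs (x i - y i) <= edist x y.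
Proof.
rewrite /edist -sqrt_Rsqr_abs; apply: sqrt_le_1_alt.
by apply: (sumR_term (fun i => Rsqr (x i - y i))) => j; apply: Rle_0_sqr.
Qed.

Lemma coord_le_enorm {N} (x : pt N) i : Rabs (x i) <= enorm x.
Proof.
rewrite /enorm -sqrt_Rsqr_abs; apply: sqrt_le_1_alt.
by apply: (sumR_term (fun i => Rsqr (x i))) => j; apply: Rle_0_sqr.
Qed.

Lemma edist_self {N} (x : pt N) : edist x x = 0.
Proof. by rewrite /edist /sumR big1 ?sqrt_0 // => i _; rewrite Rminus_diag Rsqr_0. Qed.

Lemma edist_lt_coords {N} (x y : pt N) d : (0 < N)%nat -> 0 < d ->
  (forall i, Rabs (x i - y i) < d / INR N) -> edist x y < d.
Proof.
move=> N0 d0 xy; have N1 : 1 <= INR N by apply: (le_INR 1); apply/leP.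
have dN : 0 <= d / INR N by left; apply: Rdiv_lt_0_compat; lra.
rewrite /edist -(sqrt_Rsqr d); last lra.
apply: sqrt_lt_1_alt; split; first by apply: sumR_ge0 => i; apply: Rle_0_sqr.
apply: (Rlt_le_trans _ (sumR (fun _ : 'I_N => Rsqr (d / INR N)))).
  apply: sumR_lt => // i; rewrite Rsqr_abs; apply: Rsqr_incrst_1 => //; exact: Rabs_pos.
rewrite sumR_const /Rsqr; have -> : INR N * (d / INR N * (d / INR N)) = d * d / INR N by field; lra.
apply: (Rmult_le_reg_r (INR N)); first lra.
have -> : d * d / INR N * INR N = d * d by field; lra.
by have := Rle_0_sqr d; rewrite /Rsqr; nra.
Qed.

Lemma upd_same {N} (x : pt N) i t : upd x i t i = t.
Proof. by rewrite /upd eqxx. Qed.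

Lemma upd_other {N} (x : pt N) i j t : j != i -> upd x i t j = x j.
Proof. by rewrite /upd => /negbTE ->. Qed.

Lemma upd_upd {N} (x : pt N) i t s : upd (upd x i t) i s = upd x i s.
Proof. by apply: functional_extensionality => j; rewrite /upd; case: (j == i). Qed.

Lemma upd_id {N} (x : pt N) i : upd x i (x i) = x.
Proof. by apply: functional_extensionality => j; rewrite /upd; case: (j =P i) => [->|]. Qed.

Lemma edist_upd {N} (x : pt N) i t : edist x (upd x i t) = Rabs (x i - t).
Proof.
rewrite /edist (sumR_one _ i) ?upd_same ?sqrt_Rsqr_abs // => j ji.
by rewrite upd_other // Rminus_diag Rsqr_0.
Qed.

Lemma sub_closure {N} (S : pt N -> Prop) x : S x -> closure S x.
Proof. by move=> Sx r r0; exists x; rewrite edist_self. Qed.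

Lemma closure_mono {N} (S T : pt N -> Prop) x :
  (forall y, S y -> T y) -> closure S x -> closure T x.
Proof. by move=> ST Sx r r0; case: (Sx r r0) => y [/ST Ty xy]; exists y. Qed.

Lemma closure_coord_le {N} (S : pt N -> Prop) i x B :
  (forall y, S y -> y i <= B) -> closure S x -> x i <= B.
Proof.
move=> SB Sx; apply: Rnot_lt_le => Bx.
case: (Sx (x i - B)) => [|y [/SB yB xy]]; first lra.
by have := coord_le_edist x y i; move/Rabs_le_between; lra.
Qed.

Lemma closure_coord_ge {N} (S : pt N -> Prop) i x B :
  (forall y, S y -> B <= y i) -> closure S x -> B <= x i.
Proof.
move=> SB Sx; apply: Rnot_lt_le => Bx.
case: (Sx (B - x i)) => [|y [/SB yB xy]]; first lra.
by have := coord_le_edist x y i; move/Rabs_le_between; lra.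
Qed.

Lemma closure_coord_abs {N} (S : pt N -> Prop) i x B :
  (forall y, S y -> Rabs (y i) <= B) -> closure S x -> Rabs (x i) <= B.
Proof.
move=> SB Sx; apply/Rabs_le_between; split.
- by apply: (closure_coord_ge S) Sx => y /SB /Rabs_le_between; lra.
- by apply: (closure_coord_le S) Sx => y /SB /Rabs_le_between; lra.
Qed.

Fixpoint toT (N : nat) : pt N -> Compactness.Tn N R :=
  match N return pt N -> Compactness.Tn N R with
  | 0 => fun _ => tt
  | N'.+1 => fun x => (x ord0, toT N' (fun i => x (lift ord0 i)))
  end.

Fixpoint ofT (N : nat) : Compactness.Tn N R -> pt N :=
  match N return Compactness.Tn N R -> pt N with
  | 0 => fun _ _ => 0
  | N'.+1 => fun p i => if unlift ord0 i is Some j then ofT N' p.2 j else p.1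
  end.

Fixpoint constT (N : nat) (a : R) : Compactness.Tn N R :=
  if N is N'.+1 then (a, constT N' a) else tt.

Lemma bounded_toT N a b (x : pt N) : (forall i, a <= x i <= b) ->
  Compactness.bounded_n N (constT N a) (constT N b) (toT N x).
Proof. by elim: N x => [|N IH] x xab //=; split; [exact: xab | apply: IH => i; exact: xab]. Qed.

Lemma close_toT N d (x : pt N) t : Compactness.close_n N d (toT N x) t ->
  forall i, Rabs (x i - ofT N t i) < d.
Proof.
elim: N x t => [|N IH] x t /=; first by move=> _ [].
case: t => t1 t2 [xt1 xt2] i; case: (unliftP ord0 i) => [j ->|->] //.
exact: IH xt2 j.
Qed.

Lemma cube_gauge_cover N B (delta : pt N -> R) : (forall t, 0 < delta t) ->
  ~ ~ exists l : list (pt N), forall x, (forall i, Rabs (x i) <= B) ->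
    exists t, List.In t l /\ forall i, Rabs (x i - t i) < delta t.
Proof.
move=> delta0 nocover.
apply: (Compactness.compactness_list N (constT N (- B)) (constT N B)
          (fun p => mkposreal _ (delta0 (ofT N p)))) => [[l cover]].
apply: nocover; exists (List.map (ofT N) l) => x xB.
have [|t [tl [_ xt]]] := cover (toT N x).
  by apply: bounded_toT => i; apply/Rabs_le_between.
by exists (ofT N t); split; [exact: List.in_map | exact: close_toT].
Qed.

Lemma box_outside_closure {N} (S : pt N -> Prop) t : (0 < N)%nat -> ~ closure S t ->
  exists d, 0 < d /\ forall y, closure S y -> ~ (forall i, Rabs (y i - t i) < d).
Proof.
move=> N0 tS; have N0' : 0 < INR N by apply: lt_0_INR; apply/ltP.
have [r [r0 far]] : exists r, 0 < r /\ forall s, S s -> r <= edist t s.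
  apply: NNPP => nofar; apply: tS => r r0; apply: NNPP => nonear; apply: nofar.
  by exists r; split => // s Ss; apply: Rnot_lt_le => ts; apply: nonear; exists s.
have d0 : 0 < r / 2 / INR N by apply: Rdiv_lt_0_compat; lra.
exists (r / 2 / INR N); split => // y Sy yt.
have [s [Ss ys]] := Sy _ d0; apply: (Rlt_not_le _ _ _ (far s Ss)).
apply: edist_lt_coords => // i.
have := yt i; have := coord_le_edist y s i.
move=> /Rabs_le_between ysi /Rabs_lt_between yti; apply/Rabs_lt_between.
have -> : r / INR N = r / 2 / INR N + r / 2 / INR N by field; lra.
lra.
Qed.

Lemma box_above {N} (S : pt N -> Prop) (f : pt N -> R) t a : (0 < N)%nat ->
  cont_on (closure S) f -> closure S t -> a < f t ->
  exists d, 0 < d /\ forall y, closure S y -> (forall i, Rabs (y i - t i) < d) -> a < f y.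
Proof.
move=> N0 fc St at_; have N0' : 0 < INR N by apply: lt_0_INR; apply/ltP.
have [e [e0 fe]] := fc t St (f t - a) ltac:(lra).
exists (e / INR N); split; first exact: Rdiv_lt_0_compat.
move=> y Sy yt.
have ty : edist t y < e by apply: edist_lt_coords => // i; rewrite Rabs_minus_sym.
by have /Rabs_lt_between := fe y Sy ty; lra.
Qed.

Lemma list_argmin {N} (P : pt N -> Prop) (f : pt N -> R) x0 (l : list (pt N)) :
  P x0 -> exists z, P z /\ forall p, List.In p l -> P p -> f z <= f p.
Proof.
move=> Px0; elim: l => [|p l [z [Pz zmin]]]; first by exists x0.
case: (classic (P p)) => [Pp|nPp]; last first.
  by exists z; split => // q [<-|ql] Pq; [|exact: zmin].
case: (Rle_dec (f z) (f p)) => zp.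
- by exists z; split => // q [<-|ql] Pq; [|exact: zmin].
- exists p; split => // q [<-|ql] Pq; first lra.
  by have := zmin q ql Pq; lra.
Qed.

(* By contradiction: every point t
   gets a box gauge, either excluding the closure or on which f exceeds the
   value f (w t) at some better point w t; a finite subcover then contradicts
   the minimality of the best of the finitely many points w t. *)
Lemma attain_min {N} (S : pt N -> Prop) (f : pt N -> R) B : (0 < N)%nat ->
  (forall x, S x -> forall i, Rabs (x i) <= B) -> (exists x, S x) ->
  cont_on (closure S) f ->
  exists y, closure S y /\ forall z, closure S z -> f y <= f z.
Proof.
move=> N0 SB [x0 Sx0] fc; apply: NNPP => nomin.
pose box (y t : pt N) d := forall i, Rabs (y i - t i) < d.
have gauge : forall t, exists dw : R * pt N, 0 < dw.1 /\
    (closure S t -> closure S dw.2 /\ forall y, closure S y -> box y t dw.1 -> f dw.2 < f y) /\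
    (~ closure S t -> forall y, closure S y -> ~ box y t dw.1).
  move=> t; case: (classic (closure S t)) => St.
  - have [w [Sw wt]] : exists w, closure S w /\ f w < f t.
      apply: NNPP => nobetter; apply: nomin; exists t; split => // z Sz.
      by apply: Rnot_lt_le => zt; apply: nobetter; exists z.
    have [d [d0 fd]] := box_above S f t (f w) N0 fc St wt.
    by exists (d, w).
  - have [d [d0 far]] := box_outside_closure S t N0 St.
    by exists (d, x0).
have [dw gaugeP] := choice _ gauge.
apply: (cube_gauge_cover N B (fun t => (dw t).1)) => [t|[l cover]]; first by case: (gaugeP t).
have [z [Sz zmin]] := list_argmin (closure S) f x0 (List.map (fun t => (dw t).2) l)
  (sub_closure S x0 Sx0).
have [t [tl zt]] := cover z (fun i => closure_coord_abs S i z B (fun y Sy => SB y Sy i) Sz).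
have [_ [inside outside]] := gaugeP t.
case: (classic (closure S t)) => St; last exact: outside St z Sz zt.
have [Sw wbetter] := inside St.
have := zmin _ (List.in_map (fun t => (dw t).2) l t tl) Sw.
by have := wbetter z Sz zt; lra.
Qed.

Section Continuity.
Context {N : nat} {K : pt N -> Prop}.

Lemma cont_sub (K' : pt N -> Prop) f : cont_on K f -> (forall x, K' x -> K x) -> cont_on K' f.
Proof.
move=> fc K'K x /K'K Kx eps eps0; have [d [d0 fd]] := fc x Kx eps eps0.
by exists d; split => // y /K'K; exact: fd.
Qed.

Lemma cont_coord j : cont_on K (fun y => y j).
Proof.
move=> x _ eps eps0; exists eps; split => // y _ xy.
by rewrite Rabs_minus_sym; apply: Rle_lt_trans (coord_le_edist x y j) xy.
Qed.

Lemma cont_plus f g : cont_on K f -> cont_on K g -> cont_on K (fun y => f y + g y).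
Proof.
move=> fc gc x Kx eps eps0.
have [d1 [d10 fd]] := fc x Kx (eps / 2) ltac:(lra).
have [d2 [d20 gd]] := gc x Kx (eps / 2) ltac:(lra).
exists (Rmin d1 d2); split; first exact: Rmin_pos.
move=> y Ky /Rmin_Rgt [xy1 xy2].
have /Rabs_lt_between := fd y Ky xy1; have /Rabs_lt_between := gd y Ky xy2.
by move=> ? ?; apply/Rabs_lt_between; lra.
Qed.

Lemma cont_comp f (g : R -> R) : cont_on K f -> continuity g -> cont_on K (fun y => g (f y)).
Proof.
move=> fc gc x Kx eps eps0.
have [a [a0 ga]] := gc (f x) eps eps0.
have [d [d0 fd]] := fc x Kx a a0.
exists d; split => // y Ky xy.
case: (Req_dec (f y) (f x)) => [->|fyx]; first by rewrite Rminus_diag Rabs_R0.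
by apply: (ga (f y)); split; [split => // /esym | exact: fd].
Qed.

(* Products, by polarisation: f g = ((f + g)^2 - (f - g)^2) / 4. *)
Lemma cont_mult f g : cont_on K f -> cont_on K g -> cont_on K (fun y => f y * g y).
Proof.
move=> fc gc.
have -> : (fun y => f y * g y) =
    (fun y => / 4 * (Rsqr (f y + g y) + - Rsqr (f y + - g y))).
  by apply: functional_extensionality => y; rewrite /Rsqr; field.
have Rsqr_cont : continuity Rsqr by move=> x; apply: derivable_continuous_pt; reg.
have Ropp_cont : continuity Ropp by move=> x; apply: derivable_continuous_pt; reg.
apply: (cont_comp _ (Rmult (/ 4))); last by move=> x; apply: derivable_continuous_pt; reg.
apply: cont_plus; first by apply: (cont_comp _ _ _ Rsqr_cont); exact: cont_plus.
apply: (cont_comp _ _ _ Ropp_cont); apply: (cont_comp _ _ _ Rsqr_cont).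
by apply: cont_plus => //; exact: (cont_comp _ _ _ Ropp_cont).
Qed.

End Continuity.

Lemma continuity_of_derivative (g g' : R -> R) :
  (forall t, derivable_pt_lim g t (g' t)) -> continuity g.
Proof. by move=> dg t; apply: derivable_continuous_pt; exists (g' t); exact: dg. Qed.

Section PartialDerivatives.
Context {N : nat}.
Implicit Types (f g : pt N -> R) (x : pt N).

Lemma is_partial_eq f i x l l' : l = l' -> is_partial f i x l -> is_partial f i x l'.
Proof. by move=> ->. Qed.

Lemma partial_const (a : R) i x : is_partial (fun _ => a) i x 0.
Proof. exact: derivable_pt_lim_const. Qed.

Lemma partial_plus f g i x a b : is_partial f i x a -> is_partial g i x b ->
  is_partial (fun y => f y + g y) i x (a + b).
Proof. exact: derivable_pt_lim_plus. Qed.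

Lemma partial_mult f g i x a b : is_partial f i x a -> is_partial g i x b ->
  is_partial (fun y => f y * g y) i x (a * g x + f x * b).
Proof. by move=> fa gb; have := derivable_pt_lim_mult _ _ _ _ _ fa gb; rewrite /= upd_id. Qed.

Lemma partial_coord_comp (h : R -> R) h' j i x : derivable_pt_lim h (x j) h' ->
  is_partial (fun y => h (y j)) i x (if i == j then h' else 0).
Proof.
move=> dh; rewrite /is_partial; case: (i =P j) => [->|ij].
- by apply: (derivable_pt_lim_ext h) dh => t; rewrite upd_same.
- apply: (derivable_pt_lim_ext (fct_cte (h (x j)))); last exact: derivable_pt_lim_const.
  by move=> t; rewrite upd_other //; apply/eqP => ji; apply: ij.
Qed.

End PartialDerivatives.

Definition has_pure_partials {N} (S : pt N -> Prop) (f : pt N -> R)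
    (Df D2f : 'I_N -> pt N -> R) : Prop :=
  (forall i x, S x -> is_partial f i x (Df i x)) /\
  (forall i x, S x -> is_partial (Df i) i x (D2f i x)).

Lemma pure_partials_plus {N} (S : pt N -> Prop) f g Df Dg D2f D2g :
  has_pure_partials S f Df D2f -> has_pure_partials S g Dg D2g ->
  has_pure_partials S (fun y => f y + g y)
    (fun i y => Df i y + Dg i y) (fun i y => D2f i y + D2g i y).
Proof.
move=> [f1 f2] [g1 g2]; split=> i x Sx; apply: partial_plus.
- exact: f1. - exact: g1. - exact: f2. - exact: g2.
Qed.

Definition entire_harmonic {N} (g : pt N -> R) : Prop :=
  exists Dg D2g, has_pure_partials (fun _ => True) g Dg D2g /\
    (forall y, sumR (fun i => D2g i y) = 0) /\ cont_on (fun _ => True) g.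

Lemma entire_harmonic_plus {N} (f g : pt N -> R) :
  entire_harmonic f -> entire_harmonic g -> entire_harmonic (fun y => f y + g y).
Proof.
move=> [Df [D2f [fp [flap fc]]]] [Dg [D2g [gp [glap gc]]]].
exists (fun i y => Df i y + Dg i y), (fun i y => D2f i y + D2g i y).
split; first exact: pure_partials_plus.
by split; [move=> y; rewrite sumR_add flap glap Rplus_0_r | exact: cont_plus].
Qed.

Lemma coord_pure_partials {N} (S : pt N -> Prop) (h h1 h2 : R -> R) (j : 'I_N) :
  (forall t, derivable_pt_lim h t (h1 t)) -> (forall t, derivable_pt_lim h1 t (h2 t)) ->
  has_pure_partials S (fun y => h (y j))
    (fun i y => if i == j then h1 (y j) else 0) (fun i y => if i == j then h2 (y j) else 0).
Proof.
move=> dh dh1; split=> i x _; first exact: partial_coord_comp.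
case: (i =P j) => [->|_]; last exact: partial_const.
by have := partial_coord_comp h1 _ j j x (dh1 _); rewrite eqxx.
Qed.

Lemma affine_harmonic {N} (a b : R) (j : 'I_N) : entire_harmonic (fun y => a * y j + b).
Proof.
have [da dconst] : (forall t, derivable_pt_lim (fun s => a * s + b) t a) /\
    (forall t, derivable_pt_lim (fun _ => a) t 0).
  by split=> t; apply/is_derive_Reals; auto_derive; [done | ring | done | ring].
exists (fun i _ => if i == j then a else 0), (fun i _ => if i == j then 0 else 0).
split.
  exact: (coord_pure_partials _ (fun s => a * s + b) (fun _ => a) (fun _ => 0) j da dconst).
split; first by move=> y; rewrite /sumR big1 // => i _; case: (i == j).
apply: (cont_comp (fun y => y j) (fun s => a * s + b) (cont_coord j)).
exact: (continuity_of_derivative _ (fun _ => a)).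
Qed.

Lemma separable_pure_partials {N} (p p1 p2 q q1 q2 : R -> R) (j k : 'I_N) : j != k ->
  (forall t, derivable_pt_lim p t (p1 t)) -> (forall t, derivable_pt_lim p1 t (p2 t)) ->
  (forall t, derivable_pt_lim q t (q1 t)) -> (forall t, derivable_pt_lim q1 t (q2 t)) ->
  has_pure_partials (fun _ => True) (fun y => p (y j) * q (y k))
    (fun i y => (if i == j then p1 (y j) else 0) * q (y k) +
                p (y j) * (if i == k then q1 (y k) else 0))
    (fun i y => (if i == j then p2 (y j) * q (y k) else 0) +
                (if i == k then p (y j) * q2 (y k) else 0)).
Proof.
move=> jk dp dp1 dq dq1; have kj : (k == j) = false by rewrite eq_sym (negbTE jk).
split=> i x _; first by apply: partial_mult; exact: partial_coord_comp.
case: (i =P j) => [->|ij]; last case: (i =P k) => [->|ik].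
- rewrite (negbTE jk).
  apply: (is_partial_eq _ _ _ (p2 (x j) * q (x k) + p1 (x j) * 0 + (p1 (x j) * 0 + p (x j) * 0))).
    by ring.
  apply: partial_plus; apply: partial_mult; try exact: partial_const.
  + by have := partial_coord_comp p1 _ j j x (dp1 _); rewrite eqxx.
  + by have := partial_coord_comp q _ k j x (dq _); rewrite (negbTE jk).
  + by have := partial_coord_comp p _ j j x (dp _); rewrite eqxx.
- apply: (is_partial_eq _ _ _ (0 * q (x k) + 0 * q1 (x k) + (0 * q1 (x k) + p (x j) * q2 (x k)))).
    by ring.
  apply: partial_plus; apply: partial_mult; try exact: partial_const.
  + by have := partial_coord_comp q _ k k x (dq _); rewrite eqxx.
  + by have := partial_coord_comp p _ j k x (dp _); rewrite kj.
  + by have := partial_coord_comp q1 _ k k x (dq1 _); rewrite eqxx.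
- apply: (is_partial_eq _ _ _ (0 * q (x k) + 0 * 0 + (0 * 0 + p (x j) * 0))); first by ring.
  apply: partial_plus; apply: partial_mult; try exact: partial_const.
  + by have := partial_coord_comp q _ k i x (dq _); case: (i =P k).
  + by have := partial_coord_comp p _ j i x (dp _); case: (i =P j).
Qed.

Lemma separable_harmonic {N} (p p1 p2 q q1 q2 : R -> R) (j k : 'I_N) : j != k ->
  (forall t, derivable_pt_lim p t (p1 t)) -> (forall t, derivable_pt_lim p1 t (p2 t)) ->
  (forall t, derivable_pt_lim q t (q1 t)) -> (forall t, derivable_pt_lim q1 t (q2 t)) ->
  (forall a b, p2 a * q b + p a * q2 b = 0) ->
  entire_harmonic (fun y => p (y j) * q (y k)).
Proof.
move=> jk dp dp1 dq dq1 lap; have kj : (k == j) = false by rewrite eq_sym (negbTE jk).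
eexists; eexists; split.
  exact: (separable_pure_partials p p1 p2 q q1 q2 j k jk dp dp1 dq dq1).
split.
- move=> y /=; rewrite (sumR_two _ j k) // ?eqxx ?(negbTE jk) ?kj; last first.
    by move=> i /negbTE -> /negbTE ->; ring.
  by have := lap (y j) (y k); lra.
- apply: cont_mult; apply: cont_comp; try exact: cont_coord.
  + exact: continuity_of_derivative dp.
  + exact: continuity_of_derivative dq.
Qed.

Lemma deriv_local_min (g : R -> R) t0 r l : 0 < r ->
  (forall t, Rabs (t - t0) < r -> g t0 <= g t) -> derivable_pt_lim g t0 l -> l = 0.
Proof.
move=> r0 gmin dg; pose pr := exist (fun l => derivable_pt_lim g t0 l) l dg.
rewrite -(derive_pt_eq_0 g t0 l pr dg).
apply: (deriv_minimum g (t0 - r) (t0 + r)); try lra.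
by move=> t t1 t2; apply: gmin; apply/Rabs_lt_between'; lra.
Qed.

(* Second derivative test: at an interior local minimum, g'' >= 0.  If g''(t0) < 0,
   then g' < 0 just right of t0 (as g'(t0) = 0), and g decreases there. *)
Lemma second_deriv_local_min (g Dg : R -> R) t0 r s : 0 < r ->
  (forall t, Rabs (t - t0) < r -> g t0 <= g t) ->
  (forall t, Rabs (t - t0) < r -> derivable_pt_lim g t (Dg t)) ->
  derivable_pt_lim Dg t0 s -> 0 <= s.
Proof.
move=> r0 gmin dg dDg; apply: Rnot_lt_le => s0.
have Dg0 : Dg t0 = 0.
  by apply: (deriv_local_min g t0 r) => //; apply: dg; rewrite Rminus_diag Rabs_R0.
have [h [[h0 hr] Dg_neg]] : exists h, (0 < h < r) /\ forall t, t0 < t <= t0 + h -> Dg t < 0.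
  have [d dDg'] := dDg (- s / 2) ltac:(lra); have d0 := cond_pos d.
  exists (Rmin (d / 2) (r / 2)); split.
    by split; [apply: Rmin_pos; lra | have := Rmin_r (d / 2) (r / 2); lra].
  move=> t [t1 t2]; have := Rmin_l (d / 2) (r / 2) => hd.
  have /Rabs_lt_between := dDg' (t - t0) ltac:(lra) ltac:(apply/Rabs_lt_between; lra).
  rewrite Dg0 Rminus_0_r (_ : t0 + (t - t0) = t); last ring.
  move=> [_ q]; apply: Rnot_le_lt => Dgt; have : 0 <= Dg t / (t - t0).
    by apply: Rdiv_le_0_compat; lra.
  lra.
have [c [gc [c1 c2]]] := MVT_cor2 g Dg t0 (t0 + h) ltac:(lra)
  (fun c hc => dg c ltac:(apply/Rabs_lt_between'; lra)).
have := gmin (t0 + h) ltac:(apply/Rabs_lt_between'; lra).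
have := Dg_neg c ltac:(lra); nra.
Qed.

Lemma pure_second_partial_at_min {N} (S : pt N -> Prop) (z Dz : pt N -> R) y i s :
  is_open S -> S y -> (forall x, S x -> z y <= z x) ->
  (forall x, S x -> is_partial z i x (Dz x)) -> is_partial Dz i y s -> 0 <= s.
Proof.
move=> Sopen Sy ymin dz dDz; have [r [r0 ball]] := Sopen y Sy.
have near : forall t, Rabs (t - y i) < r -> S (upd y i t).
  by move=> t yt; apply: ball; rewrite edist_upd Rabs_minus_sym.
apply: (second_deriv_local_min (fun t => z (upd y i t)) (fun t => Dz (upd y i t)) (y i) r) => //.
- by move=> t /near Syt; rewrite upd_id; exact: ymin.
- move=> t /near /dz; rewrite /is_partial upd_same.
  by apply: derivable_pt_lim_ext => u; rewrite upd_upd.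
Qed.

Lemma no_min_at_strict_superharmonic {N} (S : pt N -> Prop) (z : pt N -> R) Dz D2z y :
  is_open S -> has_pure_partials S z Dz D2z -> S y -> sumR (fun i => D2z i y) < 0 ->
  ~ (forall x, S x -> z y <= z x).
Proof.
move=> Sopen [dz d2z] Sy lap ymin.
have D2z0 : forall i, 0 <= D2z i y.
  move=> i; apply: (pure_second_partial_at_min S z (Dz i) y i) => //; last exact: d2z.
  by move=> x Sx; exact: dz.
by have := sumR_ge0 _ D2z0; lra.
Qed.

(* Perturbing z by - eps y_(i0)^2 makes the inequality strict, so that the
   minimum over the closure, which is negative if z takes a negative value,
   can be attained neither inside S nor on its boundary. *)
Lemma weak_min_principle {N} (S : pt N -> Prop) (z : pt N -> R) Dz D2z B (i0 : 'I_N) :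
  is_open S -> (forall x, S x -> forall i, Rabs (x i) <= B) ->
  cont_on (closure S) z -> has_pure_partials S z Dz D2z ->
  (forall x, S x -> sumR (fun i => D2z i x) <= 0) ->
  (forall x, closure S x -> ~ S x -> 0 <= z x) ->
  forall x, S x -> 0 <= z x.
Proof.
move=> Sopen SB zc zp lap zbd x1 Sx1; apply: Rnot_lt_le => zx1.
have B0 : 0 <= B by apply: Rle_trans (Rabs_pos (x1 i0)) (SB x1 Sx1 i0).
pose eps := - z x1 / (2 * (B * B + 1)).
have eps0 : 0 < eps by apply: Rdiv_lt_0_compat; nra.
have epsB : eps * (B * B) < - z x1.
  have : eps * (2 * (B * B + 1)) = - z x1 by rewrite /eps; field; nra.
  nra.
pose quad s := - eps * (s * s).
pose ze y := z y + quad (y i0).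
have [dquad d2quad] : (forall s, derivable_pt_lim quad s (- eps * (2 * s))) /\
    (forall s, derivable_pt_lim (fun s => - eps * (2 * s)) s (- eps * 2)).
  by rewrite /quad; split=> s; apply/is_derive_Reals; auto_derive; [done | ring | done | ring].
have [ys [Sys ysmin]] : exists ys, closure S ys /\ forall y, closure S y -> ze ys <= ze y.
  apply: (attain_min S ze B) => //; first by apply: (leq_ltn_trans (leq0n _) (ltn_ord i0)).
    by exists x1.
  apply: cont_plus => //; apply: (cont_comp (fun y => y i0) quad (cont_coord i0)).
  exact: continuity_of_derivative dquad.
have ys_neg : ze ys <= z x1.
  apply: Rle_trans (ysmin x1 (sub_closure S x1 Sx1)) _.
  by rewrite /ze /quad; have := Rle_0_sqr (x1 i0); rewrite /Rsqr; nra.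
have Sys' : S ys.
  apply: NNPP => nSys; have := zbd ys Sys nSys.
  have /Rabs_le_between [ysB1 ysB2] := closure_coord_abs S i0 ys B (fun y Sy => SB y Sy i0) Sys.
  have ysq : eps * (ys i0 * ys i0) <= eps * (B * B) by apply: Rmult_le_compat_l; nra.
  move: ys_neg; rewrite /ze /quad; lra.
apply: (no_min_at_strict_superharmonic S ze _ _ ys Sopen
  (pure_partials_plus S z _ Dz _ D2z _ zp (coord_pure_partials S quad _ _ i0 dquad d2quad))) => //.
- rewrite sumR_add (sumR_one (fun i => if i == i0 then _ else 0) i0) ?eqxx; last first.
    by move=> i /negbTE ->.
  by have := lap ys Sys'; lra.
- by move=> y /sub_closure; exact: ysmin.
Qed.

Lemma ext_max {n} (x : pt n) l : ext x l ord_max = l.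
Proof. by rewrite /ext unlift_none. Qed.

Lemma ext_lift {n} (x : pt n) l i : ext x l (lift ord_max i) = x i.
Proof. by rewrite /ext liftK. Qed.

Lemma base_ext {n} (x : pt n) l : base (ext x l) = x.
Proof. by apply: functional_extensionality => i; exact: ext_lift. Qed.

Lemma ext_base {n} (y : pt n.+1) : ext (base y) (y ord_max) = y.
Proof.
apply: functional_extensionality => j; rewrite /ext.
by case: (unliftP ord_max j) => [i ->|->].
Qed.

Lemma edist_base {n} (y y' : pt n.+1) : edist (base y) (base y') <= edist y y'.
Proof.
rewrite /edist; apply: sqrt_le_1_alt; rewrite (sumR_lift (fun i => Rsqr (y i - y' i))).
by have := Rle_0_sqr (y ord_max - y' ord_max); rewrite /base; lra.
Qed.

Definition trunc_cyl {n} (H : pt n -> Prop) (L : R) : pt n.+1 -> Prop :=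
  fun y => H (base y) /\ 0 < y ord_max < L.

Lemma trunc_cyl_cyl {n} (H : pt n -> Prop) L y : trunc_cyl H L y -> cyl H y.
Proof. by case=> ? [? _]; split. Qed.

Lemma trunc_cyl_open {n} (H : pt n -> Prop) L : is_open H -> is_open (trunc_cyl H L).
Proof.
move=> Hopen y [Hy [y0 yL]]; have [r [r0 ball]] := Hopen _ Hy.
pose s := Rmin r (Rmin (y ord_max) (L - y ord_max)).
have s_r : s <= r := Rmin_l _ _.
have s_y : s <= y ord_max := Rle_trans _ _ _ (Rmin_r _ _) (Rmin_l _ _).
have s_L : s <= L - y ord_max := Rle_trans _ _ _ (Rmin_r _ _) (Rmin_r _ _).
exists s; split; first by apply: Rmin_pos => //; apply: Rmin_pos; lra.
move=> y' yy'; have /Rabs_le_between' [y'1 y'2] : Rabs (y' ord_max - y ord_max) <= edist y y'.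
  by rewrite Rabs_minus_sym; exact: coord_le_edist.
split; last by split; lra.
by apply: ball; apply: Rle_lt_trans (edist_base y y') _; lra.
Qed.

Lemma trunc_cyl_bounded {n} (H : pt n -> Prop) L MH :
  (forall x, H x -> forall i, Rabs (x i) <= MH) ->
  forall y, trunc_cyl H L y -> forall j, Rabs (y j) <= Rabs MH + Rabs L.
Proof.
move=> HB y [Hy [y0 yL]] j.
have MH0 := Rabs_pos MH; have L0 := Rabs_pos L; have MH1 := Rle_abs MH; have L1 := Rle_abs L.
case: (unliftP ord_max j) => [i ->|->]; first by have := HB _ Hy i; rewrite /base; lra.
by rewrite Rabs_right; lra.
Qed.

Lemma trunc_cyl_closure {n} (H : pt n -> Prop) L y : closure (trunc_cyl H L) y ->
  closure H (base y) /\ 0 <= y ord_max <= L.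
Proof.
move=> Cy; split; [|split].
- move=> r r0; have [s [[Hs _] ys]] := Cy r r0; exists (base s); split => //.
  exact: Rle_lt_trans (edist_base y s) ys.
- by apply: (closure_coord_ge (trunc_cyl H L)) Cy => s [_ [? _]]; lra.
- by apply: (closure_coord_le (trunc_cyl H L)) Cy => s [_ [_ ?]]; lra.
Qed.

Lemma trunc_cyl_boundary {n} (H : pt n -> Prop) L y :
  closure (trunc_cyl H L) y -> ~ trunc_cyl H L y ->
  (boundary H (base y) /\ 0 <= y ord_max) \/
  (H (base y) /\ y ord_max = 0) \/ (y ord_max = L /\ cyl H y).
Proof.
move=> Cy nCy; have [CHy [y0 yL]] := trunc_cyl_closure H L y Cy.
case: (classic (H (base y))) => Hy; last by left.
right; case: (Req_dec (y ord_max) 0) => y0'; first by left.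
right; have yL' : y ord_max = L by apply: NNPP => yL'; apply: nCy; split => //; lra.
by split => //; split => //; lra.
Qed.

Section HarmonicExtension.
Variables (n : nat) (H : pt n -> Prop) (phi u : pt n -> R) (MH : R).
Variables (v : pt n.+1 -> R) (Dv D2v : 'I_n.+1 -> pt n.+1 -> R).
Hypothesis H_open : is_open H.
Hypothesis H_bounded : forall x, H x -> forall i, Rabs (x i) <= MH.
Hypothesis phi_nonneg : forall x, boundary H x -> 0 <= phi x.
Hypothesis v_partials : has_pure_partials (cyl H) v Dv D2v.
Hypothesis v_harmonic : forall y, cyl H y -> sumR (fun i => D2v i y) = 0.
Hypothesis v_cont : cont_on (closure (cyl H)) v.
Hypothesis v_bottom : forall x, H x -> v (ext x 0) = u x.
Hypothesis v_lateral : forall x l, boundary H x -> 0 <= l -> v (ext x l) = phi x.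

Lemma trunc_cyl_comparison L g : entire_harmonic g ->
  (forall y, closure (trunc_cyl H L) y -> ~ trunc_cyl H L y -> 0 <= v y + g y) ->
  forall y, trunc_cyl H L y -> 0 <= v y + g y.
Proof.
move=> [Dg [D2g [[g1 g2] [g_harmonic g_cont]]]] g_bd; have [v1 v2] := v_partials.
apply: (weak_min_principle _ _ (fun i y => Dv i y + Dg i y) (fun i y => D2v i y + D2g i y)
          (Rabs MH + Rabs L) ord_max) => //.
- exact: trunc_cyl_open.
- exact: trunc_cyl_bounded.
- apply: cont_plus; last exact: (cont_sub _ _ g_cont).
  by apply: (cont_sub _ _ v_cont) => y; apply: closure_mono; exact: trunc_cyl_cyl.
- apply: pure_partials_plus; split=> i y Ty.
  + exact: v1 _ _ (trunc_cyl_cyl _ _ _ Ty).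
  + exact: v2 _ _ (trunc_cyl_cyl _ _ _ Ty).
  + exact: g1.
  + exact: g2.
- by move=> y Ty; rewrite sumR_add g_harmonic v_harmonic; [lra | exact: trunc_cyl_cyl Ty].
Qed.

Lemma trunc_cyl_boundary_values L y :
  closure (trunc_cyl H L) y -> ~ trunc_cyl H L y ->
  0 <= v y \/ (H (base y) /\ y ord_max = 0 /\ v y = u (base y)) \/ (y ord_max = L /\ cyl H y).
Proof.
move=> Cy nTy; have vy : v y = v (ext (base y) (y ord_max)) by rewrite ext_base.
case: (trunc_cyl_boundary H L y Cy nTy) => [[dHy y0]|[[Hy y0]|top]]; last by right; right.
- by left; rewrite vy v_lateral //; exact: phi_nonneg.
- by right; left; rewrite vy y0 v_bottom.
Qed.

(* A bounded harmonic extension stays above any lower bound m <= 0 of u: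
   if v y < m, compare v with the affine function m - eta lambda on
   H x (0, L) for L so large that the top boundary is harmless. *)
Lemma ext_lower_bound m Mv : m <= 0 -> (forall x, H x -> m <= u x) ->
  (forall y, cyl H y -> Rabs (v y) <= Mv) -> forall y, cyl H y -> m <= v y.
Proof.
move=> m0 um v_bounded y [Hy y0]; apply: Rnot_lt_le => vy.
have Mvm : 0 <= Mv - m by have := Rabs_pos (v y); have := v_bounded y (conj Hy y0); lra.
pose eta := (m - v y) / (2 * y ord_max).
have eta0 : 0 < eta by apply: Rdiv_lt_0_compat; lra.
pose L := y ord_max + (Mv - m) / eta + 1.
have Mv_eta : 0 <= (Mv - m) / eta by apply: Rdiv_le_0_compat.
have : 0 <= v y + (eta * y ord_max + - m).
  apply: (trunc_cyl_comparison L (fun w => eta * w ord_max + - m)).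
  - exact: affine_harmonic.
  - move=> w Cw nTw; have [_ [w0 wL]] := trunc_cyl_closure H L w Cw.
    case: (trunc_cyl_boundary_values L w Cw nTw) => [vw|[[Hw [-> ->]]|[-> Cyw]]].
    + have : 0 <= eta * w ord_max by apply: Rmult_le_pos; lra.
      lra.
    + by have := um _ Hw; lra.
    + have /Rabs_le_between [vw _] := v_bounded w Cyw.
      have : eta * L = eta * y ord_max + (Mv - m) + eta by rewrite /L; field; lra.
      have : 0 < eta * y ord_max by apply: Rmult_lt_0_compat.
      lra.
  - by split => //; rewrite /L; lra.
have -> : v y + (eta * y ord_max + - m) = (v y - m) / 2 by rewrite /eta; field; lra.
lra.
Qed.

Lemma sin_exp_harmonic (a : R) (i : 'I_n) :
  entire_harmonic (fun y : pt n.+1 => a * sin (PI * y ord_max) * exp (PI * y (lift ord_max i))).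
Proof.
apply: (separable_harmonic (fun s => a * sin (PI * s)) (fun s => a * (PI * cos (PI * s)))
  (fun s => a * (PI * (PI * - sin (PI * s)))) (fun s => exp (PI * s)) (fun s => PI * exp (PI * s))
  (fun s => PI * (PI * exp (PI * s)))).
- exact: neq_lift.
- by move=> t; apply/is_derive_Reals; auto_derive; [done | ring].
- by move=> t; apply/is_derive_Reals; auto_derive; [done | ring].
- by move=> t; apply/is_derive_Reals; auto_derive; [done | ring].
- by move=> t; apply/is_derive_Reals; auto_derive; [done | ring].
- by move=> s t; ring.
Qed.

Lemma ext_barrier_bound m eps (i : 'I_n) : (forall x, H x -> m <= u x) ->
  (forall y, cyl H y -> m <= v y) -> 0 <= eps -> eps * exp (PI * MH) <= - m ->
  forall x h, H x -> 0 < h < 1 -> eps * sin (PI * h) * exp (PI * x i) <= v (ext x h) - m.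
Proof.
move=> um vm eps0 epsm x h Hx h01; have PI0 := PI_RGT_0.
pose g (w : pt n.+1) := - eps * sin (PI * w ord_max) * exp (PI * w (lift ord_max i)) +
                         (0 * w ord_max + - m).
have : 0 <= v (ext x h) + g (ext x h).
  apply: (trunc_cyl_comparison 1 g).
    exact: (entire_harmonic_plus _ _ (sin_exp_harmonic _ _) (affine_harmonic _ _ _)).
  - move=> w Cw nTw; rewrite /g; have [CHw [w0 w1]] := trunc_cyl_closure H 1 w Cw.
    case: (trunc_cyl_boundary_values 1 w Cw nTw) => [vw|[[Hw [-> ->]]|[-> Cyw]]].
    + have sin0 : 0 <= sin (PI * w ord_max) by apply: sin_ge_0; nra.
      have exp_le : exp (PI * w (lift ord_max i)) <= exp (PI * MH).
        have /Rabs_le_between [_ wi] := closure_coord_abs H i (base w) MH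
          (fun y Hy => H_bounded y Hy i) CHw.
        by apply: Rnot_lt_le => /exp_lt_inv; rewrite /base in wi; nra.
      have [_ sin1] := SIN_bound (PI * w ord_max).
      have exp0 := exp_pos (PI * w (lift ord_max i)).
      have : eps * (sin (PI * w ord_max) * exp (PI * w (lift ord_max i))) <= eps * exp (PI * MH).
        by apply: Rmult_le_compat_l => //; nra.
      lra.
    + by rewrite Rmult_0_r sin_0; have := um _ Hw; lra.
    + by rewrite Rmult_1_r sin_PI; have := vm _ Cyw; lra.
  - by split; [rewrite base_ext | rewrite ext_max; lra].
by rewrite /g ext_max ext_lift; lra.
Qed.
End HarmonicExtension.

Lemma sin_ge_half_near0 : exists d, 0 < d /\ forall t, 0 < t < d -> t / 2 <= sin t.
Proof.
have [d dsin] := derivable_pt_lim_sin 0 (1 / 2) ltac:(lra).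
exists d; split => [|t [t0 td]]; first exact: cond_pos.
have /Rabs_lt_between [sin_t _] := dsin t ltac:(lra) ltac:(rewrite Rabs_right; lra).
rewrite Rplus_0_l sin_0 cos_0 Rminus_0_r in sin_t.
have : 1 / 2 <= sin t / t by lra.
have -> : sin t = sin t / t * t by field; lra.
nra.
Qed.

Lemma right_deriv_ge (g : R -> R) l k : right_deriv g 0 l ->
  (exists d, 0 < d /\ forall h, 0 < h < d -> k * h <= g h - g 0) -> k <= l.
Proof.
move=> dg [d [d0 gk]]; apply: Rnot_lt_le => lk.
have [e [e0 ge]] := dg (k - l) ltac:(lra).
pose h := Rmin (d / 2) (e / 2).
have h0 : 0 < h by apply: Rmin_pos; lra.
have [hd he] : h < d /\ h < e.
  by split; [have := Rmin_l (d / 2) (e / 2) | have := Rmin_r (d / 2) (e / 2)]; rewrite -/h; lra.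
have /Rabs_lt_between [_ q] := ge h h0 he; rewrite Rplus_0_l in q.
have : k <= (g h - g 0) / h.
  apply: (Rmult_le_reg_r h) => //.
  by rewrite /Rdiv Rmult_assoc Rinv_l ?Rmult_1_r; [apply: gk | lra].
lra.
Qed.

Lemma hopf_slope (g : R -> R) l a : 0 < a -> right_deriv g 0 l ->
  (forall h, 0 < h < 1 -> a * sin (PI * h) <= g h - g 0) -> a * PI / 2 <= l.
Proof.
move=> a0 dg ga; have PI0 := PI_RGT_0; apply: (right_deriv_ge g) => //.
have [d [d0 sinh]] := sin_ge_half_near0.
exists (Rmin 1 (d / PI)); split; first by apply: Rmin_pos; [lra | exact: Rdiv_lt_0_compat].
move=> h [h0 hd]; have [h1 hdPI] := (Rmin_Rgt _ _ _).1 hd.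
have : PI * h / 2 <= sin (PI * h).
  apply: sinh; split; first nra.
  have -> : d = PI * (d / PI) by field; lra.
  exact: Rmult_lt_compat_l.
have := ga h ltac:(lra); nra.
Qed.

(* The key estimate: at an interior point x0 where u attains a negative minimum
   over H, D_{H,phi} u (x0) < 0.  The extension v stays above m = u x0 in the
   cylinder, so the barrier bound makes lambda |-> v (x0, lambda) grow at a
   positive rate at lambda = 0. *)
Lemma DHphi_neg_at_negative_min {n} (i : 'I_n) (H : pt n -> Prop) (phi u : pt n -> R) MH x0 d :
  is_open H -> (forall x, H x -> forall j, Rabs (x j) <= MH) ->
  (forall x, boundary H x -> 0 <= phi x) ->
  H x0 -> u x0 < 0 -> (forall x, H x -> u x0 <= u x) ->
  DHphi H phi u x0 d -> d < 0.
Proof.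
move=> H_open H_bounded phi_nonneg Hx0 ux0 u_min [v [v_ext dv]].
have [[Dv [D2v [[v1 [v2 [_ _]]] v_lap]]] [[Mv v_bounded] [v_cont [v_bottom v_lateral]]]] := v_ext.
have v_partials : has_pure_partials (cyl H) v Dv (fun j => D2v j j).
  by split=> j y Cy; [exact: v1 | exact: v2].
have v_ge_m := ext_lower_bound n H phi u MH v Dv _ H_open H_bounded phi_nonneg v_partials
  v_lap v_cont v_bottom v_lateral (u x0) Mv ltac:(lra) u_min v_bounded.
pose eps := - u x0 / exp (PI * MH).
have eps0 : 0 < eps by apply: Rdiv_lt_0_compat; [lra | exact: exp_pos].
have barrier := ext_barrier_bound n H phi u MH v Dv _ H_open H_bounded phi_nonneg v_partials
  v_lap v_cont v_bottom v_lateral (u x0) eps i u_min v_ge_m ltac:(lra)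
  ltac:(right; rewrite /eps; field; apply: Rgt_not_eq; exact: exp_pos) x0.
have a0 : 0 < eps * exp (PI * x0 i) by apply: Rmult_lt_0_compat => //; exact: exp_pos.
have slope : eps * exp (PI * x0 i) * PI / 2 <= - d.
  apply: (hopf_slope (fun l => v (ext x0 l))) => // h h01.
  by have := barrier h Hx0 h01; rewrite /= v_bottom //; lra.
by have := PI_RGT_0; nra.
Qed.

(* Theorem 7, as outlined at the top of the file. *)
Theorem mainTheorem7 (n : nat) (hn : (1 <= n)%nat)
  (H : pt n -> Prop) (c u phi : pt n -> R) :
  is_domain H -> is_bounded H ->
  (forall x, H x -> 0 <= c x) ->
  C2_on H u -> cont_on (closure H) u ->
  (forall x, H x -> exists d, DHphi H phi u x d /\ d + c x * u x >= 0) ->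
  (forall x, boundary H x -> u x = phi x) ->
  (forall x, boundary H x -> 0 <= phi x) ->
  forall x, H x -> 0 <= u x.
Proof.
move=> [H_open [_ [x1 Hx1]]] [MH H_norm] c_nonneg _ u_cont Du_ge u_phi phi_nonneg x Hx.
have H_bounded : forall y, H y -> forall i, Rabs (y i) <= MH.
  by move=> y Hy i; apply: Rle_trans (coord_le_enorm y i) (H_norm y Hy).
have [y0 [Cy0 y0_min]] := attain_min H u MH hn H_bounded (ex_intro _ x1 Hx1) u_cont.
case: (Rle_lt_dec 0 (u y0)) => [u0|u_neg].
  exact: Rle_trans u0 (y0_min x (sub_closure H x Hx)).
have Hy0 : H y0.
  by apply: NNPP => nHy0; have := phi_nonneg y0 (conj Cy0 nHy0); rewrite -u_phi //; lra.
have [d [Du Du_c]] := Du_ge y0 Hy0.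
have := DHphi_neg_at_negative_min (Ordinal hn) H phi u MH y0 d H_open H_bounded phi_nonneg
  Hy0 u_neg (fun y Hy => y0_min y (sub_closure H y Hy)) Du.
by have := c_nonneg y0 Hy0; nra.
Qed.
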